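(* Let $N\ge 3$ be even, $K>0$ and $0<P\le 2K$. Consider the equations for phase differences $\theta_1,\dots,\theta_N$ of a ring network with homogeneous power distribution $P_i=(-1)^{i+1}P$: \[ \sin\theta_i-\sin\theta_{i+1}=\frac{P_i}{K}\quad (i=1,\dots,N,\ \theta_{N+1}=\theta_1),\qquad \sum_{i=1}^N\theta_i=2m\pi\ \text{ for some } m\in\{-\lfloor N/2\rfloor,\dots,\lfloor N/2\rfloor\}. \] The total number of stable equilibria, i.e. solutions with all $\theta_i\in[-\pi/2,\pi/2]$, is \[ N_s=1+2\Big\lfloor \frac{N}{2\pi}\arccos\Big(\sqrt{\frac{P}{2K}}\Big)\Big\rfloor . \]
   Context: These equations describe the equilibria $(\boldsymbol\delta,\mathbf 0)$ of the ring swing-equation system $\ddot\delta_i+\alpha\dot\delta_i+K[\sin(\delta_i-\delta_{i+1})+\sin(\delta_i-\delta_{i-1})]=P_i$ (indices mod $N$) in terms of the phase differences $\theta_1=\delta_1-\delta_N$, $\theta_i=\delta_i-\delta_{i-1}$ (mod $2\pi$). $\lfloor x\rfloor$ denotes the largest integer not exceeding $x$. *)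

From HB Require Import structures.
From mathcomp Require Import all_boot all_order all_algebra.
From mathcomp Require Import all_classical all_reals all_analysis.
Set Implicit Arguments. Unset Strict Implicit. Unset Printing Implicit Defensive.
Import Order.TTheory GRing.Theory Num.Theory.
Local Open Scope ring_scope.

(* Index i = 1..N of the paper is represented by j : 'I_N with i = j+1.
   theta_{i+1} (cyclic, theta_{N+1} = theta_1) is theta (ordS j). *)

Definition Pdist {R : realType} (N : nat) (P : R) (j : 'I_N) : R :=
  (-1) ^+ (nat_of_ord j) * P.

Definition ring_eq {R : realType} (N : nat) (K P : R) (theta : 'I_N -> R) : Prop :=
  (forall j : 'I_N, sin (theta j) - sin (theta (ordS j)) = Pdist P j / K) /\
  exists m : int, - ((N./2)%:Z) <= m <= (N./2)%:Z /\
    \sum_(j < N) theta j = 2 * m%:~R * pi.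

Definition stable_eq {R : realType} (N : nat) (K P : R) (theta : 'I_N -> R) : Prop :=
  ring_eq K P theta /\ forall j : 'I_N, - (pi / 2) <= theta j <= pi / 2.

From HB Require Import structures.
From mathcomp Require Import all_boot all_order all_algebra.
From mathcomp Require Import all_classical all_reals all_analysis.
From mathcomp Require Import ring lra.
Import Order.TTheory GRing.Theory Num.Theory.
Local Open Scope ring_scope.

(* In a stable equilibrium all phases lie in [-pi/2, pi/2], where sin is injective; since
   the equations force sin theta_i to alternate between two values, theta alternates between
   a = u + d and b = u - d.  The equations reduce to sin a - sin b = 2 cos u sin d = P / K
   and the winding condition to N u = 2 m pi.  For a given u an admissible d exists, and is
   then unique (d = asin (P / (2 K cos u))), exactly when cos u >= sqrt (P / (2 K)), i.e.
   when |u| <= acos (sqrt (P / (2 K))).  So stable equilibria correspond to the integers m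
   with |2 pi m / N| <= acos (sqrt (P / (2 K))), of which there are 1 + 2 floor (...). *)

Section Trigonometry.
Context {R : realType}.
Implicit Types (r s u d x y : R).

Lemma sinD_subr_sinB u d : sin (u + d) - sin (u - d) = 2 * cos u * sin d.
Proof. by rewrite sinD sinB; ring. Qed.

Lemma sin_pihalfB x : sin (pi / 2 - x) = cos x.
Proof. by rewrite sinB sin_pihalf cos_pihalf; ring. Qed.

Lemma ler_sin : {in `[- (pi / 2), pi / 2 : R] &, {mono sin : x y / x <= y}}.
Proof. by move=> x y hx hy; rewrite !leNgt ltr_sin. Qed.

Lemma ler_cos : {in `[0, pi : R] &, {mono cos : x y /~ y <= x}}.
Proof. by move=> x y hx hy; rewrite !leNgt ltr_cos. Qed.

Lemma acos_itv [s] : 0 <= s <= 1 -> 0 <= acos s <= pi / 2.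
Proof.
move=> /andP[s_ge0 s_le1]; have pi_gt0 := pi_gt0 R.
have s_itv : -1 <= s <= 1 by apply/andP; split; lra.
rewrite acos_ge0 //= -ler_cos ?cos_pihalf ?acosK ?in_itv //= ?acos_ge0 ?acos_lepi //.
by apply/andP; split; lra.
Qed.

Lemma norm_le_acos s u : 0 <= s <= 1 -> `|u| <= pi ->
  (`|u| <= acos s) = (s <= cos u).
Proof.
move=> s_itv u_le_pi; have [acos_s_ge0 acos_s_le] := andP (acos_itv s_itv).
have pi_gt0 := pi_gt0 R.
rewrite -cos_norm -{2}(@acosK _ s) ?ler_cos ?in_itv //= ?normr_ge0 ?u_le_pi //.
- by apply/andP; split; lra.
- by case/andP: s_itv => ? ?; apply/andP; split; lra.
Qed.

Lemma sqrtr_itv01 [r] : r <= 1 -> 0 <= Num.sqrt r <= 1.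
Proof. by move=> r_le1; rewrite sqrtr_ge0 -[X in _ <= X]sqrtr1 ler_sqrt. Qed.

Definition half_gap r u := asin (r / cos u).

Lemma half_gap_stable_pair [r u] : 0 < r <= 1 -> `|u| <= acos (Num.sqrt r) ->
  [/\ - (pi / 2) <= u + half_gap r u <= pi / 2,
      - (pi / 2) <= u - half_gap r u <= pi / 2 &
      sin (u + half_gap r u) - sin (u - half_gap r u) = 2 * r].
Proof.
move=> /andP[r_gt0 r_le1] u_le; have pi_gt0 := pi_gt0 R.
have [_ acos_le] := andP (acos_itv (sqrtr_itv01 r_le1)).
have u_le_pihalf : `|u| <= pi / 2 by apply: le_trans acos_le.
have sqrt_le_cos : Num.sqrt r <= cos u by rewrite -norm_le_acos ?sqrtr_itv01 //; lra.
have sqrt_gt0 : 0 < Num.sqrt r by rewrite sqrtr_gt0.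
have sqrt_sq : Num.sqrt r ^+ 2 = r by rewrite sqr_sqrtr // ltW.
set c := cos u in sqrt_le_cos *; have c_gt0 : 0 < c by lra.
have c_le1 : c <= 1 by apply: cos_le1.
have q_gt0 : 0 < r / c by rewrite divr_gt0.
(* r <= c^2 makes r / c <= c, which keeps the gap inside [-pi/2, pi/2] *)
have q_le_c : r / c <= c by rewrite ler_pdivrMr //; nra.
have q_itv : -1 <= r / c <= 1 by apply/andP; split; lra.
rewrite /half_gap; set d := asin (r / c).
have sin_d : sin d = r / c by rewrite asinK // in_itv /= q_itv.
have d_itv : d \in `[- (pi / 2), pi / 2] by rewrite in_itv /= asin_geNpi2 // asin_lepi2.
have d_gt0 : 0 < d.
  by rewrite -ltr_sin ?sin0 ?sin_d // in_itv /=; apply/andP; split; lra.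
have d_le : d <= pi / 2 - `|u|.
  rewrite -ler_sin ?sin_pihalfB ?cos_norm ?sin_d // in_itv /=.
  by apply/andP; split; have := normr_ge0 u; lra.
have /andP[? ?] : - `|u| <= u <= `|u| by rewrite -ler_norml.
split; try by apply/andP; split; lra.
by rewrite sinD_subr_sinB sin_d /c; field; rewrite gt_eqF.
Qed.

Lemma stable_pair_half_gap [r u d] : 0 < r ->
  - (pi / 2) <= u + d <= pi / 2 -> - (pi / 2) <= u - d <= pi / 2 ->
  sin (u + d) - sin (u - d) = 2 * r ->
  `|u| <= acos (Num.sqrt r) /\ half_gap r u = d.
Proof.
move=> r_gt0 /andP[? ?] /andP[? ?]; rewrite sinD_subr_sinB => sin_gap.
have pi_gt0 := pi_gt0 R.
have u_le : `|u| <= pi / 2 by rewrite ler_norml; apply/andP; split; lra.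
have cos_ge0 : 0 <= cos u by apply: cos_ge0_pihalf; rewrite -ler_norml.
have cos_gt0 : 0 < cos u.
  by rewrite lt_neqAle cos_ge0 andbT; apply: contra_eqN sin_gap => /eqP <-; lra.
have r_eq : r = cos u * sin d by lra.
have sin_d : sin d = r / cos u by rewrite r_eq; field; rewrite gt_eqF.
have d_itv : d \in `[- (pi / 2), pi / 2] by rewrite in_itv /=; apply/andP; split; lra.
have ud_le : `|u| + d <= pi / 2.
  by case: (lerP 0 u) => ?; [rewrite ger0_norm | rewrite ltr0_norm]; lra.
have sin_le_cos : sin d <= cos u.
  rewrite -cos_norm -sin_pihalfB ler_sin //; first lra.
  by rewrite in_itv /=; apply/andP; split; have := normr_ge0 u; lra.
have r_le_sq : r <= cos u * cos u by rewrite r_eq ler_wpM2l.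
have r_le1 : r <= 1 by have := cos_le1 u; nra.
split; last by rewrite /half_gap -sin_d sinK.
rewrite norm_le_acos ?sqrtr_itv01 //; last lra.
have := sqrtr_ge0 r; have : Num.sqrt r ^+ 2 = r by rewrite sqr_sqrtr // ltW.
nra.
Qed.

End Trigonometry.

Lemma sum_alternating (V : zmodType) n (a b : V) : ~~ odd n ->
  \sum_(j < n) (if odd j then b else a) = (a + b) *+ n./2.
Proof.
move=> n_even; have [h ->] : exists h, n = h.*2 by exists n./2; rewrite even_halfK.
rewrite doubleK; elim: h => [|h IH]; first by rewrite big_ord0.
by rewrite doubleS !big_ord_recr /= IH odd_double mulrSr addrA.
Qed.

Lemma odd_ordS n (j : 'I_n) : ~~ odd n -> odd (ordS j) = ~~ odd j.
Proof.
move=> n_even; rewrite /ordS /=; case: (ltnP j.+1 n) => [? | n_le]; first by rewrite modn_small.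
have j_last : j.+1 = n by apply/eqP; rewrite eqn_leq n_le ltn_ord.
have odd_j : odd j by have := congr1 odd j_last; rewrite /= (negbTE n_even) => /negbFE.
by rewrite j_last modnn odd_j.
Qed.

Section RingEquilibria.
Variables (R : realType) (N : nat) (K P : R).
Hypotheses (N_gt0 : (0 < N)%N) (N_even : ~~ odd N).
Hypotheses (K_gt0 : 0 < K) (P_gt0 : 0 < P) (P_le2K : P <= 2 * K).

Local Notation r := (P / (2 * K)).

Definition phase_step : R := 2 * pi / N%:R.

Definition winding_phase (m : int) : R := m%:~R * phase_step.

Definition ring_mode (m : int) (j : 'I_N) : R :=
  let u := winding_phase m in if odd j then u - half_gap r u else u + half_gap r u.

Definition max_winding : int := Num.floor (N%:R / (2 * pi) * acos (Num.sqrt r)).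

Let N_gt1 : (1 < N)%N.
Proof. by case: N N_gt0 N_even => [|[]]. Qed.

Let i0 : 'I_N := Ordinal N_gt0.
Let i1 : 'I_N := Ordinal N_gt1.

Let ordS_i0 : ordS i0 = i1.
Proof. by apply: val_inj; rewrite /= modn_small. Qed.

Let N_half : N%:R = 2 * (N./2)%:R :> R.
Proof. by rewrite -[in LHS](even_halfK N_even) -muln2 natrM mulrC. Qed.

Let half_neq0 : (N./2)%:R != 0 :> R.
Proof. by rewrite pnatr_eq0 -lt0n half_gt0. Qed.

Let r_itv : 0 < r <= 1.
Proof.
have twoK_gt0 : 0 < 2 * K by rewrite mulr_gt0.
by rewrite divr_gt0 //= ler_pdivrMr // mul1r.
Qed.

Let acos_sqrt_itv : 0 <= acos (Num.sqrt r) <= pi / 2.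
Proof. by have /andP[_ ?] := r_itv; apply/acos_itv/sqrtr_itv01. Qed.

Let Pdist_divK (j : 'I_N) : Pdist P j / K = (-1) ^+ odd j * (2 * r).
Proof. by rewrite /Pdist -signr_odd -mulrA; congr (_ * _); field; rewrite gt_eqF. Qed.

Lemma sin_alternating [theta] : ring_eq K P theta ->
  forall j : 'I_N, sin (theta j) = sin (theta i0) - (odd j)%:R * (2 * r).
Proof.
case=> [step _] j; have -> : j = Ordinal (ltn_ord j) by apply: val_inj.
elim: (nat_of_ord j) (ltn_ord j) => [|n IH] n_lt.
  by rewrite (_ : Ordinal n_lt = i0) ?mul0r ?subr0 //; apply: val_inj.
have := step (Ordinal (ltnW n_lt)).
rewrite (_ : ordS _ = Ordinal n_lt); last by apply: val_inj; rewrite /= modn_small.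
rewrite IH Pdist_divK /=.
by case: (odd n); rewrite /= ?expr1 ?expr0 ?mulN1r ?mul1r; lra.
Qed.

Lemma stable_alternating [theta] : stable_eq K P theta ->
  forall j : 'I_N, theta j = if odd j then theta i1 else theta i0.
Proof.
case=> eqs bnd j; apply: sin_inj; rewrite ?in_itv /=.
- exact: bnd.
- by case: ifP => _; apply: bnd.
rewrite [LHS](sin_alternating eqs).
by case: (odd j); rewrite ?(sin_alternating eqs i1) /= ?mul1r ?mul0r ?subr0.
Qed.

Let phase_step_gt0 : 0 < phase_step.
Proof. by rewrite divr_gt0 ?mulr_gt0 ?ltr0n ?pi_gt0. Qed.

Let phase_stepK : phase_step * (N./2)%:R = pi.
Proof. by rewrite /phase_step N_half; field. Qed.

Lemma abs_le_max_winding m :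
  (`|m| <= max_winding) = (`|winding_phase m| <= acos (Num.sqrt r)).
Proof.
rewrite floor_ge_int intr_norm -invf_div ler_pdivlMl //.
by rewrite normrM (gtr0_norm phase_step_gt0) mulrC.
Qed.

Lemma max_winding_ge0 : 0 <= max_winding.
Proof.
have [acos_ge0 _] := andP acos_sqrt_itv.
by rewrite floor_ge0 mulr_ge0 // -invf_div invr_ge0 ltW.
Qed.

Lemma max_winding_le_half : max_winding <= (N./2)%:Z.
Proof.
have [_ acos_le] := andP acos_sqrt_itv; have pi_gt0 := pi_gt0 R.
have half_eq : (N./2)%:R = phase_step^-1 * pi.
  by rewrite -phase_stepK mulKf ?lt0r_neq0.
rewrite -(ler_int R) -[(N./2)%:~R]/((N./2)%:R : R) half_eq.
rewrite (le_trans (floor_le _)) // -invf_div.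
by rewrite ler_pM2l ?invr_gt0 //; lra.
Qed.

Lemma ring_mode_stable m : `|m| <= max_winding -> stable_eq K P (ring_mode m).
Proof.
move=> m_le; have := m_le; rewrite abs_le_max_winding => u_le.
have [plus_itv minus_itv gap] := half_gap_stable_pair r_itv u_le.
rewrite /stable_eq /ring_eq /ring_mode /=.
split; [split|].
- move=> j; rewrite Pdist_divK odd_ordS //.
  by case: (odd j); rewrite /= ?expr1 ?expr0 ?mulN1r ?mul1r; lra.
- exists m; split; first by rewrite -ler_norml (le_trans m_le max_winding_le_half).
  by rewrite sum_alternating // -[_ *+ N./2]mulr_natr -phase_stepK /winding_phase; ring.
- by move=> j; case: (odd j).
Qed.

Lemma stable_eq_ring_mode theta : stable_eq K P theta ->
  exists2 m, `|m| <= max_winding & theta = ring_mode m.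
Proof.
move=> st; have alt := stable_alternating st.
case: st => [[step [m [_ sum_eq]]] bnd]; have /andP[r_gt0 _] := r_itv.
set a := theta i0 in alt sum_eq *; set b := theta i1 in alt sum_eq *.
have gap : sin a - sin b = 2 * r.
  by rewrite /a /b -ordS_i0 step Pdist_divK /= expr0 mul1r.
have u_eq : (a + b) / 2 = winding_phase m.
  move: sum_eq; rewrite (eq_bigr _ (fun j _ => alt j)) sum_alternating //.
  rewrite -[_ *+ N./2]mulr_natr -phase_stepK /winding_phase => sum_eq.
  have /(mulIf half_neq0) -> : (a + b) * (N./2)%:R = 2 * m%:~R * phase_step * (N./2)%:R.
    by rewrite sum_eq; ring.
  by field.
have plus : (a + b) / 2 + (a - b) / 2 = a by field.
have minus : (a + b) / 2 - (a - b) / 2 = b by field.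
have := @stable_pair_half_gap _ r ((a + b) / 2) ((a - b) / 2).
rewrite plus minus => /(_ r_gt0 (bnd i0) (bnd i1) gap) [u_le gap_eq].
exists m; first by rewrite abs_le_max_winding -u_eq.
apply/funext => j; rewrite alt /ring_mode /= -u_eq gap_eq.
by case: (odd j).
Qed.

Lemma ring_mode_inj : injective ring_mode.
Proof.
move=> m1 m2 eq12.
have sum_mode m : ring_mode m i0 + ring_mode m i1 = 2 * winding_phase m.
  by rewrite /ring_mode /=; ring.
have : winding_phase m1 = winding_phase m2.
  by have := sum_mode m1; rewrite eq12 sum_mode; lra.
by move/(mulIf (lt0r_neq0 phase_step_gt0))/intr_inj.
Qed.

End RingEquilibria.

Lemma int_ball_enum [T : Type] [g : int -> T] [M : int] : 0 <= M -> injective g ->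
  exists f : 'I_(absz (1 + 2 * M)) -> T, injective f /\
    forall x, (exists k, f k = x) <-> exists2 m, `|m| <= M & g m = x.
Proof.
move=> M_ge0 g_inj.
have size_eq : absz (1 + 2 * M) = 1 + 2 * M :> int by rewrite gez0_abs // addr_ge0 // mulr_ge0.
have lt_size n : (n < absz (1 + 2 * M)%R)%N -> n%:Z <= 2 * M.
  by rewrite -ltz_nat size_eq addrC ltzD1.
exists (fun k => g (k%:Z - M)); split.
  by move=> k1 k2 /g_inj /addIr [] /val_inj.
move=> x; split => [[k <-] | [m m_le <-]].
  have k_le := lt_size _ (ltn_ord k); exists (k%:Z - M) => //.
  by rewrite ler_norml; apply/andP; split; have : 0 <= k%:Z by []; lra.
have /andP[? ?] : - M <= m <= M by rewrite -ler_norml.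
have k_ge0 : 0 <= m + M by lra.
have k_lt : (absz (m + M)%R < absz (1 + 2 * M)%R)%N by rewrite -ltz_nat size_eq gez0_abs //; lra.
by exists (Ordinal k_lt); rewrite /= gez0_abs // addrK.
Qed.

Theorem proposition1 (R : realType) (N : nat) (K P : R) :
  (3 <= N)%N -> ~~ odd N -> 0 < K -> 0 < P -> P <= 2 * K ->
  exists (Ns : nat) (f : 'I_Ns -> ('I_N -> R)),
    injective f /\
    (forall theta : 'I_N -> R, stable_eq K P theta <-> exists k, f k = theta) /\
    Ns%:Z = 1 + 2 * Num.floor (N%:R / (2 * pi) * acos (Num.sqrt (P / (2 * K)))).
Proof.
move=> N_ge3 N_even K_gt0 P_gt0 P_le2K; have N_gt0 : (0 < N)%N by apply: leq_trans N_ge3.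
have M_ge0 : 0 <= max_winding R N K P by apply: max_winding_ge0.
have mode_inj : injective (ring_mode R N K P) by apply: ring_mode_inj.
have [f [f_inj f_img]] := int_ball_enum M_ge0 mode_inj.
exists _, f; split=> //; split; last by rewrite gez0_abs // addr_ge0 // mulr_ge0.
move=> theta; rewrite f_img; split=> [st | [m m_le <-]]; last by apply: ring_mode_stable.
by case/stable_eq_ring_mode: st => // m m_le ->; exists m.
Qed.
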